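(* Let $G_{12}$ be the graph with vertex set $\{1,\dots,12\}$ in which two distinct vertices are adjacent if and only if they both belong to one of the sets $\{1,4,7\}$, $\{2,4,5,6\}$, $\{2,4,6,7\}$, $\{2,4,6,9\}$, $\{2,4,9,12\}$, $\{2,5,8\}$, $\{2,6,7,11\}$, $\{2,11,12\}$, $\{3,6,9\}$, $\{4,5,6,10\}$, $\{4,10,12\}$, $\{6,10,11\}$, $\{10,11,12\}$. Then $G_{12}$ is not $\cup$-triangle, i.e., neither $G_{12}$ nor its complement is a triangle graph.
   Context: A graph $G$ is triangle if for every maximal stable set $S$ of $G$ and every edge $uv$ of $G$ with $u,v\notin S$, there is $s\in S$ adjacent to both $u$ and $v$. A graph is $\cup$-triangle if it or its complement is triangle. *)

From mathcomp Require Import all_boot.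
Set Implicit Arguments. Unset Strict Implicit. Unset Printing Implicit Defensive.

Definition simple_graph (T : finType) (e : rel T) : Prop :=
  irreflexive e /\ symmetric e.

Definition stable (T : finType) (e : rel T) (S : {set T}) : Prop :=
  forall x y, x \in S -> y \in S -> ~~ e x y.

Definition maximal_stable (T : finType) (e : rel T) (S : {set T}) : Prop :=
  stable e S /\ forall S' : {set T}, stable e S' -> S \subset S' -> S' = S.

Definition triangle_graph (T : finType) (e : rel T) : Prop :=
  forall S : {set T}, maximal_stable e S ->
  forall u v, e u v -> u \notin S -> v \notin S ->
  exists2 s, s \in S & e s u && e s v.

Definition compl_graph (T : finType) (e : rel T) : rel T :=
  fun x y => (x != y) && ~~ e x y.

Definition cup_triangle (T : finType) (e : rel T) : Prop :=
  triangle_graph e \/ triangle_graph (compl_graph e).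

(* The graph G_12 on vertices {1..12}; vertex k is represented by the
   ordinal k-1 : 'I_12 (we compare with (val x).+1). *)
Definition G12_cliques : seq (seq nat) :=
  [:: [:: 1; 4; 7]; [:: 2; 4; 5; 6]; [:: 2; 4; 6; 7]; [:: 2; 4; 6; 9];
      [:: 2; 4; 9; 12]; [:: 2; 5; 8]; [:: 2; 6; 7; 11]; [:: 2; 11; 12];
      [:: 3; 6; 9]; [:: 4; 5; 6; 10]; [:: 4; 10; 12]; [:: 6; 10; 11];
      [:: 10; 11; 12]].

Definition G12 : rel 'I_12 :=
  fun x y => (x != y) &&
    has (fun c => ((val x).+1 \in c) && ((val y).+1 \in c)) G12_cliques.

(* Both halves are refuted by an explicit witness.  In G12 the set {5, 7, 9}
   is maximal stable and the edge {10, 11} avoids it, yet no vertex of the set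
   sees both ends.  In the complement the set {2, 11, 12} is maximal stable and
   the complement edge {7, 9} avoids it in the same way. *)
From mathcomp Require Import all_boot.

Set Implicit Arguments.
Unset Strict Implicit.
Unset Printing Implicit Defensive.

Section MaximalStable.

Variables (T : finType) (e : rel T).

Lemma maximal_stable_dominating (p : pred T) :
  (forall x y, p x -> p y -> ~~ e x y) ->
  (forall x, ~~ p x -> exists2 s, p s & e x s) ->
  maximal_stable e [set x | p x].
Proof.
move=> stable_p dom_p; split=> [x y | S' stS' sub_S'].
  by rewrite !inE; apply: stable_p.
apply/eqP; rewrite eqEsubset sub_S' andbT; apply/subsetP=> x xS'.
rewrite inE; apply/negPn/negP=> /dom_p[s ps exs].
have sS' : s \in S' by apply: (subsetP sub_S'); rewrite inE.
by have := stS' x s xS' sS'; rewrite exs.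
Qed.

Lemma not_triangle_graph (S : {set T}) (u v : T) :
  maximal_stable e S -> e u v -> u \notin S -> v \notin S ->
  (forall s, s \in S -> ~~ (e s u && e s v)) -> ~ triangle_graph e.
Proof.
move=> maxS euv uS vS noS triangle_e.
by have [s sS] := triangle_e S maxS u v euv uS vS; apply/negP/noS.
Qed.

End MaximalStable.

(* The finite checks are stated on labels in [iota 1 n] because they
   then reduce by computation, whereas enumerating ['I_n] is blocked by the
   opaque proofs inside [insub]. *)
Definition labelled_set n (L : seq nat) : {set 'I_n} := [set x | (val x).+1 \in L].

Section LabelledGraph.

Variables (n : nat) (e : rel 'I_n) (r : rel nat).
Hypothesis eE : forall x y : 'I_n, e x y = r (val x).+1 (val y).+1.

Lemma label_in_iota (x : 'I_n) : (val x).+1 \in iota 1 n.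
Proof. by rewrite mem_iota add1n !ltnS leq0n ltn_ord. Qed.

Lemma all_labels (P : pred nat) : all P (iota 1 n) -> forall x : 'I_n, P (val x).+1.
Proof. by move=> /allP all_P x; apply/all_P/label_in_iota. Qed.

Lemma has_label (P : pred nat) : has P (iota 1 n) -> exists x : 'I_n, P (val x).+1.
Proof.
case/hasP=> [[|a] a_iota Pa]; first by rewrite mem_iota in a_iota.
have a_lt : a < n by rewrite mem_iota add1n ltnS in a_iota.
by exists (Ordinal a_lt).
Qed.

Lemma labelled_maximal_stable (L : seq nat) :
  all (fun a => all (fun b => ~~ r a b) L) L ->
  all (fun a => (a \in L) || has (fun b => (b \in L) && r a b) (iota 1 n)) (iota 1 n) ->
  maximal_stable e (labelled_set n L).
Proof.
move=> /allP stable_L /all_labels dom_L; apply: maximal_stable_dominating.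
  by move=> x y xL yL; rewrite eE; apply: (allP (stable_L _ xL)).
move=> x /negbTE xL; have := dom_L x; rewrite xL => /has_label[s /andP[sL rxs]].
by exists s; rewrite // eE.
Qed.

Lemma labelled_not_triangle (L : seq nat) (u v : 'I_n) :
  maximal_stable e (labelled_set n L) -> e u v ->
  (val u).+1 \notin L -> (val v).+1 \notin L ->
  ~~ has (fun s => [&& s \in L, r s (val u).+1 & r s (val v).+1]) (iota 1 n) ->
  ~ triangle_graph e.
Proof.
move=> maxL euv uL vL no_common; apply: (not_triangle_graph maxL euv).
- by rewrite inE.
- by rewrite inE.
move=> s; rewrite inE !eE => sL; apply/negP=> common.
by case/hasP: no_common; exists (val s).+1; rewrite ?label_in_iota ?sL.
Qed.

End LabelledGraph.

Definition G12_adj (a b : nat) : bool :=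
  (a != b) && has (fun c => (a \in c) && (b \in c)) G12_cliques.

Lemma G12E (x y : 'I_12) : G12 x y = G12_adj (val x).+1 (val y).+1.
Proof. by []. Qed.

Definition compl_G12_adj (a b : nat) : bool := (a != b) && ~~ G12_adj a b.

Lemma compl_G12E (x y : 'I_12) :
  compl_graph G12 x y = compl_G12_adj (val x).+1 (val y).+1.
Proof. by []. Qed.

Lemma G12_not_triangle : ~ triangle_graph G12.
Proof.
have maxS := labelled_maximal_stable G12E (L := [:: 5; 7; 9]) isT isT.
exact: (labelled_not_triangle G12E maxS
          (u := Ordinal (isT : 9 < 12)) (v := Ordinal (isT : 10 < 12))).
Qed.

Lemma compl_G12_not_triangle : ~ triangle_graph (compl_graph G12).
Proof.
have maxS := labelled_maximal_stable compl_G12E (L := [:: 2; 11; 12]) isT isT.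
exact: (labelled_not_triangle compl_G12E maxS
          (u := Ordinal (isT : 6 < 12)) (v := Ordinal (isT : 8 < 12))).
Qed.

Theorem proposition42 : ~ cup_triangle G12.
Proof. by case; [apply: G12_not_triangle | apply: compl_G12_not_triangle]. Qed.
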